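(* Let $\Sigma$ be an indexed set and let $\{p_j \mid j \in \Sigma\}$ be pair operations on $\mathcal{P}$. Then $\big(\bigvee_{j \in \Sigma} p_j\big)^{\mathrm{sd}} = \bigwedge_{j \in \Sigma} (p_j^{\mathrm{sd}})$ and $\big(\bigwedge_{j \in \Sigma} p_j\big)^{\mathrm{sd}}=\bigvee_{j \in \Sigma} (p_j^{\mathrm{sd}})$.
   Context: $(R,\mathfrak{m},k)$ is a complete Noetherian commutative local ring, $E=E_R(k)$, $(-)^\vee=\operatorname{Hom}_R(-,E)$, and $\mathcal{P}$ is a class of pairs $(L,M)$, $L\subseteq M$, of Matlis-dualizable $R$-modules closed under ambient isomorphisms. A pair operation assigns to each pair a submodule $p(L,M)\subseteq M$ compatibly with isomorphisms. Join and meet of pair operations: $(\bigvee_j p_j)(L,M) := \sum_j p_j(L,M)$ and $(\bigwedge_j p_j)(L,M) := \bigcap_j p_j(L,M)$. Identifying $(M/N)^\vee$ with $\{g\in M^\vee\mid g(N)=0\}$ and letting $\eta_B:B\to B^{\vee\vee}$ be the Matlis duality isomorphism, the smile dual is $p^{\mathrm{sd}}(A,B) := \eta_B^{-1}\big((B^\vee / p((B/A)^\vee,B^\vee))^\vee\big)$, defined on $\mathcal{P}^\vee=\{(A,B)\mid ((B/A)^\vee,B^\vee)\in\mathcal{P}\}$. *)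

From HB Require Import structures.
From mathcomp Require Import all_boot all_algebra.
From mathcomp Require Import boolp.
Set Implicit Arguments.
Unset Strict Implicit.
Unset Printing Implicit Defensive.
Import GRing.Theory.
Local Open Scope ring_scope.

Section RingDefs.
Variable R : comNzRingType.

Definition is_ideal (I : R -> Prop) : Prop :=
  [/\ I 0, (forall x y, I x -> I y -> I (x + y)) & (forall r x, I x -> I (r * x))].

Definition fg_ideal (I : R -> Prop) : Prop :=
  exists s : seq R, (forall i : 'I_(size s), I s`_i) /\
    forall x, I x -> exists c : 'I_(size s) -> R, x = \sum_(i < size s) c i * s`_i.

Definition noetherian_ring : Prop := forall I, is_ideal I -> fg_ideal I.

Definition local_ring_with (m : R -> Prop) : Prop :=
  [/\ is_ideal m, ~ m 1 & forall x, ~ m x -> exists y, x * y = 1].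

Fixpoint ideal_pow (m : R -> Prop) (n : nat) : R -> Prop :=
  match n with
  | 0 => fun _ => True
  | n'.+1 => fun x => exists k (a b : 'I_k -> R),
      (forall i, m (a i) /\ ideal_pow m n' (b i)) /\ x = \sum_(i < k) a i * b i
  end.

(* m-adic completeness (Hausdorffness follows from Krull's theorem for
   Noetherian local rings) *)
Definition madic_complete (m : R -> Prop) : Prop :=
  forall x : nat -> R, (forall n, ideal_pow m n (x n.+1 - x n)) ->
    exists y, forall n, ideal_pow m n (y - x n).

End RingDefs.

Section ModDefs.
Variable R : comNzRingType.

Definition is_lin (M N : lmodType R) (f : M -> N) : Prop :=
  forall (a : R) x y, f (a *: x + y) = a *: f x + f y.

Definition is_submod (M : lmodType R) (S : M -> Prop) : Prop :=
  S 0 /\ forall (a : R) x y, S x -> S y -> S (a *: x + y).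

Definition img (M N : lmodType R) (f : M -> N) (S : M -> Prop) : N -> Prop :=
  fun y => exists2 x, S x & f x = y.

Definition mod_iso (M N : lmodType R) (f : M -> N) : Prop :=
  is_lin f /\ bijective f.

Definition injective_module (E : lmodType R) : Prop :=
  forall (A B : lmodType R) (i : A -> B) (f : A -> E),
    is_lin i -> injective i -> is_lin f ->
    exists2 g : B -> E, is_lin g & forall a, g (i a) = f a.

(* E = E_R(k), k = R/m: E is injective and contains an essential
   submodule R e with ann(e) = m, i.e. R e ~= R/m = k. *)
Definition injective_hull_residue (m : R -> Prop) (E : lmodType R) : Prop :=
  injective_module E /\
  exists e : E, (forall r : R, r *: e = 0 <-> m r) /\
    forall S : E -> Prop, is_submod S -> (exists2 x, S x & x <> 0) ->
      exists r : R, S (r *: e) /\ r *: e <> 0.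

End ModDefs.

Section Dual.
Variables (R : comNzRingType) (E M : lmodType R).

Definition dual := {f : M -> E | is_lin f}.

Definition dfun (g : dual) : M -> E := proj1_sig g.

Lemma dual_eq (f g : dual) : (forall x, dfun f x = dfun g x) -> f = g.
Proof.
case: f g => [f fl] [g gl] /= H.
have efg : f = g by apply: funext.
subst g; congr exist; exact: Prop_irrelevance.
Qed.

HB.instance Definition _ := gen_eqMixin dual.
HB.instance Definition _ := gen_choiceMixin dual.

Lemma lin0 : is_lin (fun _ : M => (0 : E)).
Proof. by move=> a x y; rewrite scaler0 addr0. Qed.

Lemma linD (f g : dual) : is_lin (fun x => dfun f x + dfun g x).
Proof.
case: f g => [f fl] [g gl] a x y /=.
by rewrite fl gl scalerDr addrACA.
Qed.

Lemma linN (f : dual) : is_lin (fun x => - dfun f x).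
Proof. by case: f => [f fl] a x y /=; rewrite fl opprD scalerN. Qed.

Lemma linZ (r : R) (f : dual) : is_lin (fun x => r *: dfun f x).
Proof.
case: f => [f fl] a x y /=.
by rewrite fl scalerDr !scalerA mulrC.
Qed.

Definition dzero : dual := exist _ _ lin0.
Definition dadd (f g : dual) : dual := exist _ _ (linD f g).
Definition dopp (f : dual) : dual := exist _ _ (linN f).
Definition dscale (r : R) (f : dual) : dual := exist _ _ (linZ r f).

Lemma daddA : associative dadd.
Proof. by move=> f g h; apply: dual_eq => x /=; rewrite addrA. Qed.
Lemma daddC : commutative dadd.
Proof. by move=> f g; apply: dual_eq => x /=; rewrite addrC. Qed.
Lemma dadd0 : left_id dzero dadd.
Proof. by move=> f; apply: dual_eq => x /=; rewrite add0r. Qed.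
Lemma daddN : left_inverse dzero dopp dadd.
Proof. by move=> f; apply: dual_eq => x /=; rewrite addNr. Qed.

HB.instance Definition _ := GRing.isZmodule.Build dual daddA daddC dadd0 daddN.

Lemma dscaleA a b (f : dual) : dscale a (dscale b f) = dscale (a * b) f.
Proof. by apply: dual_eq => x /=; rewrite scalerA. Qed.
Lemma dscale1 : left_id 1 dscale.
Proof. by move=> f; apply: dual_eq => x /=; rewrite scale1r. Qed.
Lemma dscaleDr : right_distributive dscale (@GRing.add dual).
Proof. by move=> a f g; apply: dual_eq => x /=; rewrite scalerDr. Qed.
Lemma dscaleDl (f : dual) : {morph dscale^~ f : a b / a + b}.
Proof. by move=> a b; apply: dual_eq => x /=; rewrite scalerDl. Qed.

HB.instance Definition _ :=
  GRing.Zmodule_isLmodule.Build R dual dscaleA dscale1 dscaleDr dscaleDl.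

End Dual.

Section Matlis.
Variables (R : comNzRingType) (E : lmodType R).

(* eta_M : M -> M^vv, m |-> (g |-> g m), is an isomorphism *)
Definition matlis_dualizable (M : lmodType R) : Prop :=
  (forall b : M, (forall g : dual E M, dfun g b = 0) -> b = 0) /\
  (forall phi : dual E (dual E M), exists b : M,
     forall g : dual E M, dfun phi g = dfun g b).

(* A class of pairs (L, M), L a submodule of M (given as a subset). *)
Definition pair_class := forall M : lmodType R, (M -> Prop) -> Prop.
Definition pair_op_fun := forall M : lmodType R, (M -> Prop) -> (M -> Prop).

Definition good_pair_class (P : pair_class) : Prop :=
  (forall M L, P M L -> is_submod L /\ matlis_dualizable M) /\
  (forall (M N : lmodType R) (f : M -> N) L,
     mod_iso f -> P M L -> P N (img f L)).

Definition pair_operation (P : pair_class) (p : pair_op_fun) : Prop :=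
  (forall M L, P M L -> is_submod (p M L)) /\
  (forall (M N : lmodType R) (f : M -> N) L, mod_iso f -> P M L ->
     forall y, p N (img f L) y <-> img f (p M L) y).

Definition op_join (I : Type) (p : I -> pair_op_fun) : pair_op_fun :=
  fun M L x => exists n (j : 'I_n -> I) (v : 'I_n -> M),
    (forall k, p (j k) M L (v k)) /\ x = \sum_(k < n) v k.

Definition op_meet (I : Type) (p : I -> pair_op_fun) : pair_op_fun :=
  fun M L x => forall i, p i M L x.

(* (M/N)^v identified with {g in M^v | g(N) = 0} *)
Definition annihilator (M : lmodType R) (A : M -> Prop) : dual E M -> Prop :=
  fun g => forall x, A x -> dfun g x = 0.

(* eta_B^{-1}((B^v / G)^v) = {b in B | g b = 0 for all g in G} *)
Definition perp (M : lmodType R) (G : dual E M -> Prop) : M -> Prop :=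
  fun b => forall g, G g -> dfun g b = 0.

(* P^v = {(A,B) | ((B/A)^v, B^v) in P} *)
Definition dual_class (P : pair_class) : pair_class :=
  fun B A => is_submod A /\ P (dual E B) (annihilator A).

Definition smile_dual (p : pair_op_fun) : pair_op_fun :=
  fun B A => perp (p (dual E B) (annihilator A)).

End Matlis.

(* The first identity is formal: a vector of B is killed by a sum of submodules of
   B^v iff it is killed by each of them.  For the second, the inclusion
   sum_j p_j^sd(A,B) <= (meet_j p_j)^sd(A,B) is again formal.  Conversely, if b lies
   outside the submodule W = sum_j p_j^sd(A,B) of B, injectivity of E and the copy
   R/m of k inside E give g in B^v killing W with g(b) <> 0.  Since B^v is
   Matlis-dualizable, every submodule U of B^v equals the annihilator of its perp
   in B; as g kills each perp p_j^sd(A,B) of U_j = p_j((B/A)^v, B^v), it lies in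
   every U_j, hence g(b) = 0. *)

From HB Require Import structures.
From mathcomp Require Import all_boot all_algebra.
From mathcomp Require Import boolp.
Set Implicit Arguments.
Unset Strict Implicit.
Unset Printing Implicit Defensive.
Import GRing.Theory.
Local Open Scope ring_scope.

Section LinearMaps.
Variables (R : comNzRingType) (M N : lmodType R) (f : M -> N).
Hypothesis f_lin : is_lin f.

Lemma lin_map0 : f 0 = 0.
Proof.
have := f_lin 1 0 0; rewrite !scale1r !addr0 => f0D.
by apply: (addrI (f 0)); rewrite addr0 -f0D.
Qed.

Lemma lin_map_sum n (v : 'I_n -> M) : f (\sum_(k < n) v k) = \sum_(k < n) f (v k).
Proof.
have f_add x y : f (x + y) = f x + f y by have := f_lin 1 x y; rewrite !scale1r.
elim: n v => [|n IHn] v; first by rewrite !big_ord0 lin_map0.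
by rewrite !big_ord_recr /= f_add IHn.
Qed.

End LinearMaps.

Lemma dfun_lin (R : comNzRingType) (E M : lmodType R) (g : dual E M) : is_lin (dfun g).
Proof. exact: proj2_sig g. Qed.

Section Submodule.
Variables (R : comNzRingType) (N : lmodType R) (S : N -> Prop).
Hypothesis S_submod : is_submod S.

Lemma submod0 : S 0. Proof. by case: S_submod. Qed.

Lemma submodP a x y : S x -> S y -> S (a *: x + y).
Proof. by case: S_submod => _; apply. Qed.

Lemma submodZ a x : S x -> S (a *: x).
Proof. by move=> Sx; have := submodP a Sx submod0; rewrite addr0. Qed.

Lemma submodB x y : S x -> S y -> S (x - y).
Proof. by move=> Sx Sy; have := submodP (-1) Sy Sx; rewrite scaleN1r addrC. Qed.

Definition submod_pred : {pred N} := fun x => `[< S x >].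

Fact submod_pred_closed : submod_closed submod_pred.
Proof.
split=> [|a x y /asboolP Sx /asboolP Sy]; apply/asboolP; first exact: submod0.
exact: submodP.
Qed.

HB.instance Definition _ := GRing.isSubmodClosed.Build R N submod_pred
  (GRing.submod_closed_semi submod_pred_closed).

Definition submod_type := {x : N | submod_pred x}.
HB.instance Definition _ := [isSub of submod_type for sval].
HB.instance Definition _ := [Choice of submod_type by <:].
HB.instance Definition _ := [SubChoice_isSubLmodule of submod_type by <:].

Lemma val_submod_lin : is_lin (val : submod_type -> N).
Proof. by move=> a x y; rewrite linearP. Qed.

Variable E : lmodType R.
Hypothesis E_inj : injective_module E.

Lemma injective_extend (f : N -> E) :
  (forall a x y, S x -> S y -> f (a *: x + y) = a *: f x + f y) ->
  exists g : dual E N, forall y, S y -> dfun g y = f y.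
Proof.
move=> f_lin.
have S_val (z : submod_type) : S (val z) by apply/asboolP/(valP z).
have fval_lin : is_lin (f \o val : submod_type -> E).
  by move=> a x y; rewrite /comp (val_submod_lin a x y) f_lin.
have [g g_lin gf] := @E_inj _ _ _ _ val_submod_lin val_inj fval_lin.
by exists (exist _ g g_lin) => y Sy; apply: (gf (Sub y (asboolT Sy))).
Qed.

End Submodule.

Definition separates_submodules (R : comNzRingType) (E : lmodType R) : Prop :=
  forall (N : lmodType R) (S : N -> Prop) (x : N), is_submod S -> ~ S x ->
    exists2 psi : dual E N, annihilator S psi & dfun psi x <> 0.

Lemma injective_residue_separates (R : comNzRingType) (m : R -> Prop)
    (E : lmodType R) (e : E) :
  local_ring_with m -> injective_module E -> (forall r, r *: e = 0 <-> m r) ->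
  separates_submodules E.
Proof.
move=> [_ m_proper m_max] E_inj ann_e N S x S_submod Sx_n.
have m_of_scale_mem r : S (r *: x) -> m r.
  move=> Srx; apply: contrapT => mr_n; have [y ry1] := m_max r mr_n.
  by apply: Sx_n; rewrite -[x]scale1r -ry1 mulrC -scalerA; apply: submodZ.
have S_comb a y z r1 r2 : S (y - r1 *: x) -> S (z - r2 *: x) ->
    S (a *: y + z - (a * r1 + r2) *: x).
  move=> S1 S2; suff -> : a *: y + z - (a * r1 + r2) *: x
                        = a *: (y - r1 *: x) + (z - r2 *: x) by exact: submodP.
  by rewrite scalerDl -scalerA scalerBr opprD addrACA.
pose Q y := exists r, S (y - r *: x).
have Q_submod : is_submod Q.
  split=> [|a y z [r1 S1] [r2 S2]]; last by exists (a * r1 + r2); apply: S_comb.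
  by exists 0; rewrite scale0r subr0; apply: submod0.
(* s + r x |-> r e is well defined on S + R x, as r x in S forces r in m = ann e. *)
pose coef y := if pselect (Q y) is left Qy then projT1 (cid Qy) else 0.
have coefE y r : S (y - r *: x) -> coef y *: e = r *: e.
  move=> Sy; rewrite /coef; case: pselect => [Qy|[]]; last by exists r.
  case: cid => r' Sy' /=; apply/eqP; rewrite -subr_eq0 -scalerBl; apply/eqP/ann_e.
  apply: m_of_scale_mem; suff -> : (r' - r) *: x = (y - r *: x) - (y - r' *: x).
    exact: submodB.
  by rewrite scalerBl opprB [RHS]addrC subrKA.
have [|g g_ext] := injective_extend Q_submod E_inj (f := fun y => coef y *: e).
  move=> a y z [r1 S1] [r2 S2].
  by rewrite (coefE _ _ (S_comb a _ _ _ _ S1 S2)) (coefE _ _ S1) (coefE _ _ S2) scalerDl scalerA.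
exists g => [s Ss|].
  have Ss0 : S (s - 0 *: x) by rewrite scale0r subr0.
  by rewrite g_ext ?(coefE _ _ Ss0) ?scale0r //; exists 0.
have Sx1 : S (x - 1 *: x) by rewrite scale1r subrr; apply: submod0.
rewrite g_ext ?(coefE _ _ Sx1) ?scale1r //; last by exists 1.
by move=> e0; apply: m_proper; apply/ann_e; rewrite scale1r.
Qed.

Lemma perp_submod (R : comNzRingType) (E M : lmodType R) (G : dual E M -> Prop) :
  is_submod (perp G).
Proof.
split=> [g _|a x y Gx Gy g Gg]; first exact: lin_map0 (dfun_lin g).
by rewrite dfun_lin Gx // Gy // scaler0 addr0.
Qed.

Lemma op_join_submod (R : comNzRingType) (I : Type) (q : I -> pair_op_fun R)
    (M : lmodType R) (L : M -> Prop) :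
  (forall i, is_submod (q i M L)) -> is_submod (op_join q L).
Proof.
move=> q_submod; split.
  exists 0, (ffun0 (card_ord 0)), (fun=> 0); split; first by case.
  by rewrite big_ord0.
move=> a x y [n1 [j1 [v1 [qv1 ->]]]] [n2 [j2 [v2 [qv2 ->]]]].
exists (n1 + n2), (fun k => match split k with inl i => j1 i | inr i => j2 i end),
  (fun k => match split k with inl i => a *: v1 i | inr i => v2 i end).
split=> [k|]; first by case: (split k) => i; [apply: submodZ | apply: qv2].
by rewrite big_split_ord scaler_sumr; congr (_ + _); apply: eq_bigr => i _;
  rewrite (unsplitK (inl _), unsplitK (inr _)).
Qed.

Lemma smile_dual_join (R : comNzRingType) (E : lmodType R) (I : Type)
    (q : I -> pair_op_fun R) (B : lmodType R) (A : B -> Prop) (b : B) :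
  smile_dual E (op_join q) A b <-> op_meet (fun i => smile_dual E (q i)) A b.
Proof.
split=> [perp_b i g qg | perp_b g [n [j [v [qv ->]]]]].
  by apply: perp_b; exists 1, (fun=> i), (fun=> g); rewrite big_ord1.
have eval_b_lin : is_lin (fun h : dual E B => dfun h b) by [].
by rewrite /= (lin_map_sum eval_b_lin) big1 // => k _; apply: perp_b.
Qed.

Section Duality.
Variables (R : comNzRingType) (E : lmodType R).
Hypothesis E_sep : separates_submodules E.

Definition dual_eval (B : lmodType R) (b : B) : dual E (dual E B) :=
  @exist _ (@is_lin R _ E) (fun g => dfun g b) (fun _ _ _ => erefl).

(* Only B^v is assumed dualizable, but that already forces eta_B to be onto. *)
Lemma dual_eval_surj (B : lmodType R) : matlis_dualizable E (dual E B) ->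
  forall phi : dual E (dual E B), exists b, forall g, dfun phi g = dfun g b.
Proof.
move=> [_ eta_surj] phi; apply: contrapT => phi_n.
pose Im (th : dual E (dual E B)) := exists b, forall g, dfun th g = dfun g b.
have Im_submod : is_submod Im.
  split=> [|a t1 t2 [b1 tb1] [b2 tb2]].
    by exists 0 => g; rewrite (lin_map0 (dfun_lin g)).
  by exists (a *: b1 + b2) => g; rewrite /= tb1 tb2 dfun_lin.
have [psi psi_Im psi_phi] := E_sep Im_submod phi_n.
have [h psi_h] := eta_surj psi.
have h0 : h = 0.
  apply: dual_eq => b; rewrite -[dfun h b]/(dfun (dual_eval b) h) -psi_h.
  by apply: psi_Im; exists b.
by apply: psi_phi; rewrite psi_h h0 (lin_map0 (dfun_lin phi)).
Qed.

Lemma annihilator_perp_sub (B : lmodType R) (U : dual E B -> Prop) :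
  matlis_dualizable E (dual E B) -> is_submod U ->
  forall g, annihilator (perp U) g -> U g.
Proof.
move=> B_dualizable U_submod g g_ann; apply: contrapT => Ug_n.
have [phi phi_U phi_g] := E_sep U_submod Ug_n.
have [b phi_b] := dual_eval_surj B_dualizable phi.
apply: phi_g; rewrite phi_b; apply: g_ann => u Uu.
by rewrite -phi_b; apply: phi_U.
Qed.

Lemma smile_dual_meet (I : Type) (q : I -> pair_op_fun R)
    (B : lmodType R) (A : B -> Prop) (b : B) :
  matlis_dualizable E (dual E B) ->
  (forall i, is_submod (q i (dual E B) (annihilator A))) ->
  smile_dual E (op_meet q) A b <-> op_join (fun i => smile_dual E (q i)) A b.
Proof.
move=> B_dualizable q_submod; split=> [perp_b|]; last first.
  move=> [n [j [v [perp_v ->]]]] g qg.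
  by rewrite (lin_map_sum (dfun_lin g)) big1 // => k _; apply: perp_v.
apply: contrapT => join_n.
have join_submod : is_submod (op_join (fun i => smile_dual E (q i)) A).
  by apply: op_join_submod => i; apply: perp_submod.
have [g g_ann g_b] := E_sep join_submod join_n.
apply: g_b; apply: perp_b => i.
apply: annihilator_perp_sub => // x qx.
by apply: g_ann; exists 1, (fun=> i), (fun=> x); rewrite big_ord1.
Qed.

End Duality.

Theorem proposition6p9
  (R : comNzRingType) (m : R -> Prop) (E : lmodType R)
  (Hnoeth : noetherian_ring R) (Hloc : local_ring_with m)
  (Hcompl : madic_complete m) (HE : injective_hull_residue m E)
  (P : pair_class R) (HP : good_pair_class E P)
  (Sigma : Type) (p : Sigma -> pair_op_fun R)
  (Hp : forall j, pair_operation P (p j)) :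
  (forall (B : lmodType R) (A : B -> Prop), dual_class E P A ->
     forall b : B, smile_dual E (op_join p) A b <->
                   op_meet (fun j => smile_dual E (p j)) A b) /\
  (forall (B : lmodType R) (A : B -> Prop), dual_class E P A ->
     forall b : B, smile_dual E (op_meet p) A b <->
                   op_join (fun j => smile_dual E (p j)) A b).
Proof.
split=> [B A _ b|B A [_ PA] b]; first exact: smile_dual_join.
have [E_inj [e [ann_e _]]] := HE.
apply: smile_dual_meet; first exact: injective_residue_separates Hloc E_inj ann_e.
  by have [/(_ _ _ PA) []] := HP.
by move=> j; have [/(_ _ _ PA)] := Hp j.
Qed.
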